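(* Let $f$ be a homeomorphism of $\mathbb{A}$ commuting with the vertical translation $z\mapsto z+(0,1)$, with bounded diffusion, and let $\mathcal{C}$ be an essential $f$-invariant circloid. Then $\sup_{n\in\mathbb{Z},z\in\mathbb{A}}|\mathrm{pr}_2(f^n(z)-z)|\le VD(\mathcal{C})+1$.
   Context: $\mathbb{A}=\mathbb{R}^2/\sim$ where $(x,y)\sim(x',y')$ iff $x-x'\in\mathbb{Z}$ and $y=y'$; $\mathrm{pr}_2$ is the second coordinate, $\mathrm{pr}_2(g(z)-z):=\mathrm{pr}_2(g(z))-\mathrm{pr}_2(z)$. Bounded diffusion means $\sup_{n\in\mathbb{Z},z\in\mathbb{A}}|\mathrm{pr}_2(f^n(z)-z)|<\infty$. An annular continuum in $\mathbb{A}$ is a compact connected set $\mathcal{C}$ whose complement consists of exactly two disjoint essential open topological annuli, each a neighborhood of one of the two ends of $\mathbb{A}$. A circloid is an annular continuum not properly containing another annular continuum. The vertical diameter is $VD(\mathcal{C})=\max_{x\in\mathcal{C}}\mathrm{pr}_2(x)-\min_{y\in\mathcal{C}}\mathrm{pr}_2(y)$. *)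

From HB Require Import structures.
From mathcomp Require Import all_boot all_order all_algebra.
From mathcomp Require Import all_classical all_reals all_analysis.
From mathcomp Require Import subtype_topology.
Set Implicit Arguments. Unset Strict Implicit. Unset Printing Implicit Defensive.
Import Order.TTheory GRing.Theory Num.Theory.
Import numFieldNormedType.Exports.
Local Open Scope classical_set_scope.
Local Open Scope ring_scope.

(* The unit circle S^1 as a subspace of R^2 (carrier of R/Z up to homeomorphism) *)
Definition circle_set (R : realType) : set (R * R)%type :=
  [set p | p.1 ^+ 2 + p.2 ^+ 2 = 1].
Definition S1 (R : realType) : topologicalType := @set_type _ (@circle_set R).

Definition Ann (R : realType) : topologicalType := (S1 R * R)%type.

Definition pr2 (R : realType) (z : Ann R) : R := z.2.
Arguments pr2 {R} z.

Definition vtrans (R : realType) (z : Ann R) : Ann R := (z.1, z.2 + 1).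
Arguments vtrans {R} z.

Definition homeomorphic (X Y : topologicalType) : Prop :=
  exists (h : X -> Y) (g : Y -> X),
    [/\ continuous h, continuous g, cancel h g & cancel g h].

(* f^n for n in Z, given the inverse homeomorphism g of f *)
Definition zpow (R : realType) (f g : Ann R -> Ann R) (n : int) : Ann R -> Ann R :=
  match n with
  | Posz k => iter k f
  | Negz k => iter k.+1 g
  end.

Definition top_disk (R : realType) (D : set (Ann R)) : Prop :=
  open D /\ homeomorphic (@set_type _ D) (R * R)%type.

Definition top_annulus (R : realType) (U : set (Ann R)) : Prop :=
  open U /\ homeomorphic (@set_type _ U) (Ann R).

Definition essential (R : realType) (E : set (Ann R)) : Prop :=
  ~ (exists D, top_disk D /\ E `<=` D).

Definition nbhd_upper_end (R : realType) (U : set (Ann R)) : Prop :=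
  exists t : R, forall z : Ann R, t < pr2 z -> U z.
Definition nbhd_lower_end (R : realType) (U : set (Ann R)) : Prop :=
  exists t : R, forall z : Ann R, pr2 z < t -> U z.

Definition annular_continuum (R : realType) (C : set (Ann R)) : Prop :=
  [/\ compact C, connected C &
   exists U V : set (Ann R),
     [/\ ~` C = U `|` V, U `&` V = set0,
         top_annulus U /\ top_annulus V,
         essential U /\ essential V &
         nbhd_upper_end U /\ nbhd_lower_end V]].

Definition circloid (R : realType) (C : set (Ann R)) : Prop :=
  annular_continuum C /\
  forall C' : set (Ann R), annular_continuum C' -> C' `<=` C -> C' = C.

(* vertical diameter: max pr2 - min pr2 over C (sup/inf, attained for compact C) *)
Definition VD (R : realType) (C : set (Ann R)) : R :=
  sup (pr2 @` C) - inf (pr2 @` C).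

Definition bounded_diffusion (R : realType) (f g : Ann R -> Ann R) : Prop :=
  exists M : R, forall (n : int) (z : Ann R),
    `| pr2 (zpow f g n z) - pr2 z | <= M.

From HB Require Import structures.
From mathcomp Require Import all_boot all_order all_algebra.
From mathcomp Require Import all_classical all_reals all_analysis.
From mathcomp Require Import subtype_topology.
From mathcomp Require Import lra.
Import Order.TTheory GRing.Theory Num.Theory.
Import numFieldNormedType.Exports.
Set Implicit Arguments.
Local Open Scope classical_set_scope.
Local Open Scope ring_scope.

(* The complement of the annular continuum [C] consists of an upper region [U]
   and a lower region [V], both connected.  A continuous [phi] with bounded
   vertical displacement that maps the complement of [C] into itself sends
   points far up in [U] into [U], so by connectedness [phi] maps [U] into [U];
   likewise [V] into [V].  Points strictly above [C] lie in [U], points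
   strictly below lie in [V], hence [U] lies above [min pr2 C] and [V] below
   [max pr2 C].  Translating [z] by an integer so that it sits above [C]
   within height 1 and using that [f^n] commutes with the translation gives
   [pr2 (f^n z) >= pr2 z - VD C - 1]; the upper bound is symmetric. *)

Lemma connected_sub_open_component (T : topologicalType) (A U V : set T) :
  connected A -> A `<=` U `|` V -> open U -> open V -> U `&` V = set0 ->
  A `&` U !=set0 -> A `<=` U.
Proof.
move=> cA AUV oU oV UV0 AU0.
have AU : A `&` U = A.
  apply: cA => //; first by exists U.
  exists (~` V); first exact: open_closedC.
  apply/seteqP; split => y [Ay Uy]; split => //.
    by move=> Vy; have : (U `&` V) y by []; rewrite UV0.
  by case: (AUV _ Ay).
by rewrite -AU => y [].
Qed.

Section Annulus.
Variable R : realType.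

Lemma circle_cos_sin (t : R) : @circle_set R (cos t, sin t).
Proof. by rewrite /circle_set /= cos2Dsin2. Qed.

Definition cis (t : R) : S1 R := SigSub (mem_set (circle_cos_sin t)).

Lemma cis_continuous : continuous cis.
Proof.
apply: (@continuous_comp_initial _ R (R * R)%type (@set_val _ (@circle_set R))).
move=> t; exact: (cvg_pair (@continuous_cos R t) (@continuous_sin R t)).
Qed.

Lemma cis_surjective (p : S1 R) : exists t, cis t = p.
Proof.
case: p => [[x y] hp].
have e : x ^+ 2 + y ^+ 2 = 1 by move: hp; rewrite inE.
have hx : -1 <= x <= 1 by apply/andP; split; nra.
have hs : Num.sqrt (1 - x ^+ 2) = `|y| by rewrite -sqrtr_sqr; congr Num.sqrt; lra.
have [y0|y0] := leP 0 y.
  exists (acos x); apply: val_inj => /=.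
  by rewrite acosK ?in_itv //= sin_acos // hs ger0_norm.
exists (- acos x); apply: val_inj => /=.
by rewrite cosN sinN acosK ?in_itv //= sin_acos // hs ltr0_norm ?opprK.
Qed.

Lemma connected_S1 : connected (@setT (S1 R)).
Proof.
have -> : @setT (S1 R) = cis @` setT.
  by apply/seteqP; split => p // _; have [t <-] := cis_surjective p; exists t.
apply: connected_continuous_connected.
  by apply/connected_intervalP => x y _ _ z _.
exact/continuous_subspaceT/cis_continuous.
Qed.

(* The band over [J] is the union of the vertical segments over [J], each
   glued to the horizontal circle at height [y0]. *)
Lemma connected_band (J : set R) (y0 : R) : connected J -> J y0 ->
  connected [set z : Ann R | J z.2].
Proof.
move=> cJ Jy0.
have -> : [set z : Ann R | J z.2] =
  \bigcup_(p in @setT (S1 R))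
     ((fun y : R => ((p, y) : Ann R)) @` J `|` (fun q : S1 R => ((q, y0) : Ann R)) @` setT).
  apply/seteqP; split => [[p y] /= Jy|[p y] [q _ [[y' Jy' [<- <-]]|[q' _ [<- <-]]]] //].
  by exists p => //; left; exists y.
apply: bigcup_connected; first by exists (cis 0, y0) => p _; right; exists (cis 0).
move=> p _; apply: connectedU.
- by exists (p, y0); split; [exists y0|exists p].
- apply: connected_continuous_connected => //; apply/continuous_subspaceT => y.
  exact: (cvg_pair (@cvg_cst _ p _ (nbhs y) _) (@cvg_id _ (nbhs y))).
- apply: connected_continuous_connected; first exact: connected_S1.
  apply/continuous_subspaceT => q.
  exact: (cvg_pair (@cvg_id _ (nbhs q)) (@cvg_cst _ y0 _ (nbhs q) _)).
Qed.

Lemma connected_top_annulus (U : set (Ann R)) : top_annulus U -> connected U.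
Proof.
move=> [_ [h [k [_ ck hk _]]]].
have -> : U = (set_val \o k) @` setT.
  apply/seteqP; split => [u Uu|_ [w _ <-]]; last exact: set_valP.
  by exists (h (SigSub (mem_set Uu))) => //=; rewrite hk.
apply: connected_continuous_connected.
  rewrite (_ : setT = [set z : Ann R | setT z.2]) //.
  by apply: (@connected_band _ 0) => //; apply/connected_intervalP => x y _ _ z _.
apply/continuous_subspaceT => x; apply: continuous_comp; first exact: ck.
exact: initial_continuous.
Qed.

Lemma compact_pr2_bounded (C : set (Ann R)) : compact C ->
  has_ubound (pr2 @` C) /\ has_lbound (pr2 @` C).
Proof.
move=> cC.
have cK : compact (pr2 @` C).
  by apply: continuous_compact => //; apply/continuous_subspaceT => z; exact: cvg_snd.
have [M [_ HM]] := compact_bounded cK.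
have hM y : (pr2 @` C) y -> `|y| <= M + 1 by move=> Cy; apply: HM Cy; lra.
by split; [exists (M + 1)|exists (- (M + 1))] => y /hM; rewrite ler_norml => /andP[].
Qed.

Lemma band_sub_component (C W W' : set (Ann R)) (J : set R) :
  connected J -> ~` C = W `|` W' -> W `&` W' = set0 -> open W -> open W' ->
  (forall w, C w -> ~ J (pr2 w)) -> (exists w, J (pr2 w) /\ W w) ->
  forall w, J (pr2 w) -> W w.
Proof.
move=> cJ eC dW oW oW' CJ [w0 [Jw0 Ww0]] w.
apply: (@connected_sub_open_component _ [set w : Ann R | J w.2] W W') => //.
- exact: connected_band cJ Jw0.
- by move=> v Jv; rewrite -eC => /CJ.
- by exists w0.
Qed.

Lemma component_invariant (C W W' : set (Ann R)) (phi : Ann R -> Ann R) :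
  continuous phi -> (forall x, ~ C x -> ~ C (phi x)) ->
  ~` C = W `|` W' -> W `&` W' = set0 -> open W -> open W' -> connected W ->
  (exists w, W w /\ W (phi w)) -> forall w, W w -> W (phi w).
Proof.
move=> cphi hC eC dW oW oW' cW [w0 [Ww0 Wphiw0]].
suff : phi @` W `<=` W by move=> H w Ww; apply: H; exists w.
apply: (@connected_sub_open_component _ _ W W') => //.
- by apply: connected_continuous_connected => //; exact/continuous_subspaceT.
- move=> _ [u Wu <-]; rewrite -eC; apply: hC.
  by have : (~` C) u by rewrite eC; left.
- by exists (phi w0); split => //; exists w0.
Qed.

Section ComplementaryRegions.
Variables (C U V : set (Ann R)).
Hypotheses (cC : compact C) (eC : ~` C = U `|` V) (dUV : U `&` V = set0).
Hypotheses (oU : open U) (oV : open V) (upU : nbhd_upper_end U) (lowV : nbhd_lower_end V).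

Lemma above_sup_upper w : sup (pr2 @` C) < pr2 w -> U w.
Proof.
have [ubC _] := compact_pr2_bounded cC.
have [t ht] := upU; set b := sup (pr2 @` C).
apply: (@band_sub_component C U V (fun y => b < y)) => //.
- by apply/connected_intervalP => x y /= bx _ v /andP[xv _]; exact: lt_le_trans bx xv.
- by move=> v Cv; apply/negP; rewrite -leNgt; apply: ub_le_sup => //; exists v.
- exists (cis 0, `|b| + `|t| + 1); rewrite /pr2 /=.
  have := ler_norm b; have := ler_norm t; have := normr_ge0 t; have := normr_ge0 b.
  by split; [|apply: ht; rewrite /pr2 /=]; lra.
Qed.

Lemma below_inf_lower w : pr2 w < inf (pr2 @` C) -> V w.
Proof.
have [_ lbC] := compact_pr2_bounded cC.
have [t ht] := lowV; set a := inf (pr2 @` C).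
apply: (@band_sub_component C V U (fun y => y < a)) => //; rewrite 1?setUC 1?setIC //.
- by apply/connected_intervalP => x y /= _ ya v /andP[_ vy]; exact: le_lt_trans vy ya.
- by move=> v Cv; apply/negP; rewrite -leNgt; apply: ge_inf => //; exists v.
- exists (cis 0, - `|a| - `|t| - 1); rewrite /pr2 /=.
  have := lerNnormlW (lexx `|a|); have := lerNnormlW (lexx `|t|).
  have := normr_ge0 a; have := normr_ge0 t.
  by split; [|apply: ht; rewrite /pr2 /=]; lra.
Qed.

Lemma upper_ge_inf w : U w -> inf (pr2 @` C) <= pr2 w.
Proof.
move=> Uw; rewrite leNgt; apply/negP => /below_inf_lower Vw.
by have : (U `&` V) w by []; rewrite dUV.
Qed.

Lemma lower_le_sup w : V w -> pr2 w <= sup (pr2 @` C).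
Proof.
move=> Vw; rewrite leNgt; apply/negP => /above_sup_upper Uw.
by have : (U `&` V) w by []; rewrite dUV.
Qed.

Variables (phi : Ann R -> Ann R) (M : R).
Hypotheses (cphi : continuous phi) (phiC : forall x, ~ C x -> ~ C (phi x)).
Hypothesis phiM : forall z, `|pr2 (phi z) - pr2 z| <= M.

Lemma upper_invariant : connected U -> forall w, U w -> U (phi w).
Proof.
move=> cU; apply: (component_invariant cphi phiC eC) => //.
have [t ht] := upU; pose w0 : Ann R := (cis 0, t + `|M| + 1).
have := phiM w0; rewrite ler_norml /pr2 /= => /andP[h _].
have := ler_norm M; have := normr_ge0 M => M0 MM.
by exists w0; split; apply: ht; rewrite /pr2 /=; lra.
Qed.

Lemma lower_invariant : connected V -> forall w, V w -> V (phi w).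
Proof.
move=> cV; apply: (component_invariant cphi phiC (W' := U)); rewrite 1?setUC 1?setIC //.
have [t ht] := lowV; pose w0 : Ann R := (cis 0, t - `|M| - 1).
have := phiM w0; rewrite ler_norml /pr2 /= => /andP[_ h].
have := ler_norm M; have := normr_ge0 M => M0 MM.
by exists w0; split; apply: ht; rewrite /pr2 /=; lra.
Qed.

End ComplementaryRegions.

Definition vshift (k : int) (z : Ann R) : Ann R := (z.1, z.2 + k%:~R).

Lemma vshiftK k z : vshift (- k) (vshift k z) = z.
Proof. by rewrite /vshift /= intrN addrK; case: z. Qed.

Lemma vshiftKN k z : vshift k (vshift (- k) z) = z.
Proof. by rewrite /vshift /= intrN addrNK; case: z. Qed.

Lemma vtrans_vshift_commute (phi : Ann R -> Ann R) :
  (forall z, phi (vtrans z) = vtrans (phi z)) ->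
  forall k z, phi (vshift k z) = vshift k (phi z).
Proof.
move=> hv.
have vshift0 w : vshift 0 w = w by rewrite /vshift /= addr0; case: w.
have vshiftS (n : nat) w : vshift n.+1 w = vtrans (vshift n w).
  by rewrite /vshift /vtrans /= -addn1 PoszD intrD addrA.
have hn (n : nat) z : phi (vshift n z) = vshift n (phi z).
  by elim: n z => [|n IH] z; rewrite ?vshift0 // !vshiftS hv IH.
case=> n z; first exact: hn.
by have := hn n.+1 (vshift (Negz n) z); rewrite NegzE vshiftKN => ->; rewrite vshiftK.
Qed.

Lemma vshift_equivariant_lower_bound (phi : Ann R -> Ann R) (a b : R) :
  (forall k z, phi (vshift k z) = vshift k (phi z)) ->
  (forall w, b < pr2 w -> a <= pr2 (phi w)) ->
  forall z, pr2 z - (b - a) - 1 <= pr2 (phi z).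
Proof.
move=> hsh hab z.
(* [k := ceil (pr2 z - b) - 1] puts [vshift (- k) z] in the band [b < y <= b + 1]. *)
have /andP[kl ku] := ceil_itv (pr2 z - b).
have := hab (vshift (- (Num.ceil (pr2 z - b) - 1)) z).
rewrite hsh /pr2 /= !intrN !intrB /=; rewrite intrB /= in kl.
rewrite /pr2 in kl ku; lra.
Qed.

Lemma vshift_equivariant_upper_bound (phi : Ann R -> Ann R) (a b : R) :
  (forall k z, phi (vshift k z) = vshift k (phi z)) ->
  (forall w, pr2 w < a -> pr2 (phi w) <= b) ->
  forall z, pr2 (phi z) <= pr2 z + (b - a) + 1.
Proof.
move=> hsh hab z.
(* [k := floor (pr2 z - a) + 1] puts [vshift (- k) z] in the band [a - 1 <= y < a]. *)
have /andP[kl ku] := floor_itv (pr2 z - a).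
have := hab (vshift (- (Num.floor (pr2 z - a) + 1)) z).
rewrite hsh /pr2 /= !intrN !intrD /=; rewrite intrD /= in ku.
rewrite /pr2 in kl ku; lra.
Qed.

Lemma vshift_equivariant_displacement (phi : Ann R -> Ann R) (a b : R) :
  (forall k z, phi (vshift k z) = vshift k (phi z)) ->
  (forall w, b < pr2 w -> a <= pr2 (phi w)) ->
  (forall w, pr2 w < a -> pr2 (phi w) <= b) ->
  forall z, `|pr2 (phi z) - pr2 z| <= b - a + 1.
Proof.
move=> hsh hlo hup z; rewrite ler_norml.
have := @vshift_equivariant_lower_bound phi a b hsh hlo z.
have := @vshift_equivariant_upper_bound phi a b hsh hup z.
by move=> *; apply/andP; split; lra.
Qed.

Section IntegerIterates.
Variables (f g : Ann R -> Ann R).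

Lemma zpow_vshift_commute :
  (forall k z, f (vshift k z) = vshift k (f z)) ->
  (forall k z, g (vshift k z) = vshift k (g z)) ->
  forall n k z, zpow f g n (vshift k z) = vshift k (zpow f g n z).
Proof.
move=> hf hg n k z.
have iter_vshift phi : (forall w, phi (vshift k w) = vshift k (phi w)) ->
    forall m, iter m phi (vshift k z) = vshift k (iter m phi z).
  by move=> hphi; elim=> [|m IH] //=; rewrite IH hphi.
by case: n => m; apply: iter_vshift.
Qed.

Lemma zpow_invariant (W : set (Ann R)) :
  (forall w, W w -> W (f w)) -> (forall w, W w -> W (g w)) ->
  forall n w, W w -> W (zpow f g n w).
Proof.
move=> hf hg n w Ww.
have iterW phi : (forall v, W v -> W (phi v)) -> forall m, W (iter m phi w).
  by move=> hphi; elim=> [|m IH] //=; apply: hphi.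
by case: n => m; apply: iterW.
Qed.

End IntegerIterates.

End Annulus.

Theorem mainTheorem9 (R : realType) (f g : Ann R -> Ann R) (C : set (Ann R)) :
  continuous f -> continuous g -> cancel f g -> cancel g f ->
  (forall z, f (vtrans z) = vtrans (f z)) ->
  bounded_diffusion f g ->
  essential C -> f @` C = C -> circloid C ->
  forall (n : int) (z : Ann R), `| pr2 (zpow f g n z) - pr2 z | <= VD C + 1.
Proof.
move=> cf cg fK gK fv [M hM] _ fC [[cC _ [U [V [eC dUV [aU aV] _ [upU lowV]]]]] _] n.
have gv w : g (vtrans w) = vtrans (g w) by rewrite -{1}(gK w) -fv fK.
have fM w : `|pr2 (f w) - pr2 w| <= M := hM 1 w.
have gM w : `|pr2 (g w) - pr2 w| <= M := hM (Negz 0) w.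
have fC' x : ~ C x -> ~ C (f x).
  by move=> nCx; rewrite -fC => -[c Cc /(can_inj fK) e]; apply: nCx; rewrite -e.
have gC' x : ~ C x -> ~ C (g x).
  by move=> nCx Cgx; apply: nCx; rewrite -(gK x) -fC; exists (g x).
have [[oU _] [oV _]] := (aU, aV).
have [cU cV] := (connected_top_annulus aU, connected_top_annulus aV).
have Un : forall w, U w -> U (zpow f g n w).
  by apply: zpow_invariant; apply: (upper_invariant eC dUV oU oV upU M) => //.
have Vn : forall w, V w -> V (zpow f g n w).
  by apply: zpow_invariant; apply: (lower_invariant eC dUV oU oV lowV M) => //.
apply: vshift_equivariant_displacement.
- exact: zpow_vshift_commute (vtrans_vshift_commute _ fv) (vtrans_vshift_commute _ gv) n.
- by move=> w /(above_sup_upper cC eC dUV oU oV upU)/Un/(upper_ge_inf cC eC dUV oU oV lowV).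
- by move=> w /(below_inf_lower cC eC dUV oU oV lowV)/Vn/(lower_le_sup cC eC dUV oU oV upU).
Qed.
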